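(* Let $n\ge2$ and let $g\ge0$ be an integer with $\gcd(n,g)=1$. Then: (i) $\det g\text{-}circ(F_1,\dots,F_n)=\det Q_g\cdot\left[(1-F_{n+1})^{n-1}+F_n^{n-2}\sum_{i=1}^{n-1}F_i\left(\frac{1-F_{n+1}}{F_n}\right)^{i-1}\right]$; (ii) $\det g\text{-}circ(L_1,\dots,L_n)=\det Q_g\cdot\left[(1-L_{n+1})^{n-1}+(L_n-2)^{n-2}\sum_{i=1}^{n-1}(L_{i+2}-3L_{i+1})\left(\frac{1-L_{n+1}}{L_n-2}\right)^{i-1}\right]$; (iii) $\det g\text{-}circ(P_1,\dots,P_n)=\det Q_g\cdot\left[(1-P_{n+1})^{n-1}+P_n^{n-2}\sum_{i=1}^{n-1}P_i\left(\frac{1-P_{n+1}}{P_n}\right)^{i-1}\right]$; (iv) $\det g\text{-}circ(J_1,\dots,J_n)=\det Q_g\cdot\left[(1-J_{n+1})^{n-1}+2^{n-1}J_n^{n-2}\sum_{i=1}^{n-1}J_i\left(\frac{1-J_{n+1}}{2J_n}\right)^{i-1}\right]$.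
   Context: Fibonacci: $F_0=0,F_1=1,F_{m+2}=F_{m+1}+F_m$. Lucas: $L_0=2,L_1=1,L_{m+2}=L_{m+1}+L_m$. Pell: $P_0=0,P_1=1,P_{m+2}=2P_{m+1}+P_m$. Jacobsthal: $J_0=0,J_1=1,J_{m+2}=J_{m+1}+2J_m$. For $n\ge1$, an integer $g\ge 0$ and numbers $a_0,\dots,a_{n-1}$, the $g$-circulant matrix $g\text{-}circ(a_0,\dots,a_{n-1})$ is the $n\times n$ matrix whose $(i,j)$ entry ($0\le i,j\le n-1$) is $a_{(j-ig)\bmod n}$. $Q_g:=g\text{-}circ(1,0,\dots,0)$, i.e. the $n\times n$ matrix whose $(i,j)$ entry is $1$ if $j\equiv ig \pmod n$ and $0$ otherwise. *)

From HB Require Import structures.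
From mathcomp Require Import all_boot all_order all_algebra.
Set Implicit Arguments. Unset Strict Implicit. Unset Printing Implicit Defensive.
Import Order.TTheory GRing.Theory Num.Theory.

Fixpoint linpair (a0 a1 c1 c2 : nat) (m : nat) : nat * nat :=
  match m with
  | 0 => (a0, a1)
  | m'.+1 => let p := linpair a0 a1 c1 c2 m' in (p.2, c1 * p.2 + c2 * p.1)
  end.
Definition linrec a0 a1 c1 c2 m := (linpair a0 a1 c1 c2 m).1.

Definition Fib (m : nat) : nat := linrec 0 1 1 1 m.
Definition Luc (m : nat) : nat := linrec 2 1 1 1 m.
Definition Pell (m : nat) : nat := linrec 0 1 2 1 m.
Definition Jac (m : nat) : nat := linrec 0 1 1 2 m.

(* g-circ(a_0,...,a_{n-1}) : (i,j) entry is a_{(j - i g) mod n}.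
   (j - i g) mod n is computed in nat as (j + (n - (i g mod n))) mod n. *)
Definition gcirc (R : Type) (n g : nat) (a : nat -> R) : 'M[R]_n :=
  \matrix_(i < n, j < n) a ((j + (n - (i * g) %% n)) %% n).

Definition Qg (R : pzRingType) (n g : nat) : 'M[R]_n :=
  gcirc n g (fun k => if k == 0%N then 1%R else 0%R : R).

From HB Require Import structures.
From mathcomp Require Import all_boot all_order all_algebra.
From mathcomp Require Import zify ring.
Set Implicit Arguments. Unset Strict Implicit. Unset Printing Implicit Defensive.
Import Order.TTheory GRing.Theory Num.Theory.
Local Open Scope ring_scope.

(* Left multiplication by Q_g turns g-circ(a) into the ordinary circulant
   circ(a), so it suffices to compute det circ(a) for a sequence with
   a_(k+2) = c1 a_(k+1) + c2 a_k.  The column operations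
   col_j <- col_j - c1 col_(j-1) - c2 col_(j-2) (j >= 2) have determinant 1
   and, by the recurrence, kill every entry of those columns except where the
   indices wrap around the period: a constant x on the diagonal and y on the
   superdiagonal.  Expanding along the first row leaves two bidiagonal
   determinants bordered by a first column, each a sum of (-y)^r x^(m-r)
   terms.  For a_k = u_(k+1) with u_1 = 1 one gets x = 1 - u_(n+1) and
   -y = c2 (u_n - u_0), and the brackets u_(i+2) - u_2 u_(i+1) left over are
   multiples of terms of a (possibly other) sequence, which gives the four
   closed forms. *)

Definition cycdiff (n i j : nat) : nat :=
  (if i <= j then j - i else j + n - i)%N.

Lemma cycdiffE (n i j : nat) : (i < n)%N -> (j < n)%N ->
  ((j + (n - i)) %% n)%N = cycdiff n i j.
Proof.
rewrite /cycdiff => hi hj; case: ifP => hij.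
  have -> : (j + (n - i) = (j - i) + n)%N by lia.
  by rewrite modnDr modn_small //; lia.
by rewrite modn_small; lia.
Qed.

Lemma gcirc1E (R : Type) (n : nat) (a : nat -> R) (i j : 'I_n) :
  gcirc n 1 a i j = a (cycdiff n i j).
Proof. by rewrite mxE muln1 (modn_small (ltn_ord i)) cycdiffE. Qed.

(* [Q_g] selects row [i g mod n] of the ordinary circulant. *)
Lemma gcirc_Qg_mul (R : pzRingType) (n g : nat) (a : nat -> R) :
  gcirc n g a = Qg R n g *m gcirc n 1 a.
Proof.
case: n a => [|n] a; first by apply/matrixP => -[].
apply/matrixP => i j; rewrite [LHS]mxE mxE.
have hig : ((i * g) %% n.+1 < n.+1)%N by rewrite ltn_pmod.
rewrite (bigD1 (Ordinal hig)) //= big1 => [|k hk]; rewrite gcirc1E mxE /=.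
  by rewrite !cycdiffE // /cycdiff leqnn subnn eqxx mul1r addr0.
rewrite cycdiffE // /cycdiff ifN ?mul0r //; move: hk; rewrite -val_eqE /= => hk.
by case: leqP => h; lia.
Qed.

Lemma det_col0_bidiag (R : comNzRingType) m (v : nat -> R) (x y : R)
    (K : 'M[R]_m.+1) :
  (forall r c : 'I_m.+1, K r c = if c == 0 :> nat then v r
     else if r == c :> nat then x else if r.+1 == c then y else 0) ->
  \det K = \sum_(r < m.+1) (-y) ^+ r * v r * x ^+ (m - r).
Proof.
elim: m v K => [|m IH] v K hK.
  by rewrite det_mx11 big_ord1 hK /= !expr0 mul1r mulr1.
rewrite (expand_det_row _ ord0) 2!big_ord_recl big1 ?addr0; last first.
  by move=> [[|k] hk] _; rewrite hK /= mul0r.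
rewrite big_ord_recl /cofactor !hK /= !expr0 !mul1r subn0.
have -> : \det (row' ord0 (col' ord0 K)) = x ^+ m.+1.
  rewrite -det_tr det_trig; last first.
    apply/is_trig_mxP => r c hrc; rewrite !mxE hK /= /bump /= !add1n.
    have [h1 h2] : (c.+1 == r.+1) = false /\ (c.+2 == r.+1) = false.
      by split; apply/eqP; lia.
    by rewrite h1 h2.
  transitivity (\prod_(i < m.+1) x); last by rewrite prodr_const card_ord.
  by apply: eq_bigr => r _; rewrite !mxE hK /= eqxx.
rewrite (IH (fun r => v r.+1)); last by move=> r [[|c] hc]; rewrite !mxE hK.
rewrite mulrC expr1 !big_distrr; congr (_ + _); apply: eq_bigr => r _.
by rewrite /bump /= add1n subSS exprS; ring.
Qed.

Section Sweep.
Variables (R : comNzRingType) (c1 c2 : R).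

(* Right multiplication by [sweep_mx n] performs the column operations
   [col_j <- col_j - c1 col_(j-1) - c2 col_(j-2)] for [j >= 2]. *)
Definition sweep_mx n : 'M[R]_n := \matrix_(k, j)
  if k == j then 1
  else if (1 < j)%N && (k.+1 == j) then - c1
  else if (1 < j)%N && (k.+2 == j) then - c2 else 0.

Lemma det_sweep_mx n : \det (sweep_mx n) = 1.
Proof.
rewrite -det_tr det_trig; last first.
  apply/is_trig_mxP => r c hrc; rewrite !mxE.
  have [h1 h2] : (c.+1 == r) = false /\ (c.+2 == r) = false.
    by split; apply/eqP; lia.
  by rewrite -val_eqE (gtn_eqF hrc) h1 h2 !andbF.
by rewrite big1 // => i _; rewrite !mxE eqxx.
Qed.

Lemma mul_sweep_mx p n (f : 'I_p -> nat -> R) i (j : 'I_n) :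
  ((\matrix_(i0, j0) f i0 j0 : 'M_(p, n)) *m sweep_mx n) i j =
    if (j < 2)%N then f i j else f i j - c1 * f i j.-1 - c2 * f i j.-2.
Proof.
rewrite mxE; case: ifP => hj.
  have j_le1 : (1 < j)%N = false by lia.
  rewrite (bigD1 j) //= big1 => [|k hk]; rewrite !mxE.
    by rewrite eqxx mulr1 addr0.
  by rewrite (negbTE hk) j_le1 mulr0.
have hj1 : (j.-1 < n)%N by have := ltn_ord j; lia.
have hj2 : (j.-2 < n)%N by have := ltn_ord j; lia.
rewrite (bigD1 j) // (bigD1 (Ordinal hj1)) /=; last by rewrite -val_eqE /=; lia.
rewrite (bigD1 (Ordinal hj2)) /=; last by rewrite -!val_eqE /=; lia.
rewrite big1 => [|k /andP[/andP[hk1 hk2] hk3]]; last first.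
  move: hk2 hk3; rewrite -!val_eqE /= => hk2 hk3; rewrite !mxE (negbTE hk1).
  by rewrite !ifN ?mulr0 //; apply/negP => /andP[_ /eqP]; lia.
rewrite !mxE eqxx -!val_eqE /=.
have [-> -> ->] : [/\ (1 < j)%N, j.-1.+1 == j & j.-2.+2 == j].
  by split; [lia | apply/eqP; lia | apply/eqP; lia].
have [-> -> ->] : [/\ (j.-1 == j) = false, (j.-2 == j) = false
                     & (j.-2.+1 == j) = false].
  by split; apply/eqP; lia.
by rewrite /= addr0; ring.
Qed.

End Sweep.

Section CirculantOfRecurrence.
Variables (R : comNzRingType) (c1 c2 : R) (m : nat) (a : nat -> R).
Hypothesis a_rec : forall k, a k.+2 = c1 * a k.+1 + c2 * a k.

Let x := a 0 - c1 * a m.+1 - c2 * a m.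
Let y := a 1 - c1 * a 0 - c2 * a m.+1.

(* Within one period the recurrence cancels the three terms; only the
   diagonal and superdiagonal see the indices wrap around [m.+2]. *)
Lemma swept_circ_entry (i j : 'I_m.+2) : (1 < j)%N ->
  a (cycdiff m.+2 i j) - c1 * a (cycdiff m.+2 i j.-1)
    - c2 * a (cycdiff m.+2 i j.-2)
  = if i == j :> nat then x else if i.+1 == j then y else 0.
Proof.
move=> hj; have hi := ltn_ord i; have hjn := ltn_ord j.
have cdE k e : (if (i <= k)%N then k - i else k + m.+2 - i)%N = e ->
  cycdiff m.+2 i k = e by [].
case: (ltngtP i j) => hij.
- case: (boolP (i.+1 == j)) => hij1.
    rewrite (cdE j 1%N) ?(cdE j.-1 0%N) ?(cdE j.-2 m.+1) //; case: ifP; lia.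
  set d := (j.-2 - i)%N.
  rewrite (cdE j d.+2) ?(cdE j.-1 d.+1) ?(cdE j.-2 d) ?a_rec;
    try by rewrite /d; case: ifP; lia.
  by ring.
- set d := (j.-2 + m.+2 - i)%N.
  rewrite ifN ?(cdE j d.+2) ?(cdE j.-1 d.+1) ?(cdE j.-2 d) ?a_rec;
    try by rewrite /d; case: ifP; lia.
  + by ring.
  + by apply/eqP; lia.
- by rewrite (cdE j 0%N) ?(cdE j.-1 m.+1) ?(cdE j.-2 m) //; case: ifP; lia.
Qed.

Lemma det_circ_rec : \det (gcirc m.+2 1 a) =
  \sum_(r < m.+1) (- y) ^+ r * x ^+ (m - r) *
     (a 0 * a ((m.+2 - r) %% m.+2) - a 1 * a (m.+1 - r)).
Proof.
pose N := gcirc m.+2 1 a *m sweep_mx c1 c2 m.+2.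
have NE i j : N i j = if (j < 2)%N then a (cycdiff m.+2 i j)
                      else if i == j :> nat then x
                      else if i.+1 == j then y else 0.
  pose f (i0 : 'I_m.+2) j0 := a (cycdiff m.+2 i0 j0).
  have circE : gcirc m.+2 1 a = \matrix_(i0, j0) f i0 j0.
    by apply/matrixP => i0 j0; rewrite gcirc1E mxE.
  rewrite /N circE (mul_sweep_mx _ _ f); case: ifP => // /negbT; rewrite -leqNgt.
  exact: swept_circ_entry.
rewrite -[LHS]mulr1 -(det_sweep_mx c1 c2 m.+2) -det_mulmx -/N.
rewrite (expand_det_row _ ord0) 2!big_ord_recl big1 ?addr0; last first.
  by move=> [[|[|k]] hk] _; rewrite NE mul0r.
rewrite /cofactor !NE /=.
rewrite (@det_col0_bidiag _ _ (fun r => a (cycdiff m.+2 r.+1 1)) x y); last first.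
  by move=> r [[|c] hc]; rewrite 2!mxE NE.
rewrite (@det_col0_bidiag _ _ (fun r => a (cycdiff m.+2 r.+1 0)) x y); last first.
  by move=> r [[|c] hc]; rewrite 2!mxE NE.
rewrite /bump add0n addn0 expr0 expr1 mul1r mulN1r mulrN !big_distrr.
rewrite -sumrN -big_split.
apply: eq_bigr => -[r hr] _ /=.
have -> : a (cycdiff m.+2 r.+1 0) = a (m.+1 - r).
  by congr a; rewrite /cycdiff /=; lia.
have -> : a (cycdiff m.+2 r.+1 1) = a ((m.+2 - r) %% m.+2).
  case: r hr => [|r] hr; first by rewrite modnn.
  by rewrite modn_small; [congr a; rewrite /cycdiff /= | ]; lia.
by rewrite /cycdiff /=; ring.
Qed.
End CirculantOfRecurrence.

Lemma sum_pow_ratio (F : fieldType) m (b : nat -> F) (X w : F) : w != 0 ->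
  w ^+ m * \sum_(1 <= i < m.+2) b i * (X / w) ^+ i.-1 =
  \sum_(r < m.+1) b (m.+1 - r)%N * w ^+ r * X ^+ (m - r).
Proof.
move=> w0; rewrite big_add1 big_mkord big_distrr (reindex_inj rev_ord_inj) /=.
apply: eq_bigr => -[r hr] _ /=.
rewrite subSS -subSn; last by lia.
have -> : w ^+ m = w ^+ (m - r) * w ^+ r by rewrite -exprD subnK //; lia.
rewrite expr_div_n.
field; by rewrite expf_neq0.
Qed.

Lemma det_circ_shift (F : fieldType) (c1 c2 s w : F) (u b : nat -> F) m :
  (forall k, u k.+2 = c1 * u k.+1 + c2 * u k) -> u 1%N = 1 ->
  c2 * (u m.+2 - u 0%N) = w -> w != 0 ->
  (forall i, (0 < i < m.+2)%N -> s * b i = u i.+2 - u 2%N * u i.+1) ->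
  \det (gcirc m.+2 1 (fun k => u k.+1)) =
    (1 - u m.+3) ^+ m.+1 +
    s * w ^+ m * \sum_(1 <= i < m.+2) b i * ((1 - u m.+3) / w) ^+ i.-1.
Proof.
move=> u_rec u1 hw w0 hb.
rewrite (det_circ_rec (c1:=c1) (c2:=c2)) => [|j]; last exact: u_rec.
have -> : u 1%N - c1 * u m.+2 - c2 * u m.+1 = 1 - u m.+3.
  by rewrite u1 (u_rec m.+1); ring.
have -> : - (u 2%N - c1 * u 1%N - c2 * u m.+2) = w.
  by rewrite -hw (u_rec 0%N) u1; ring.
rewrite -mulrA sum_pow_ratio // big_distrr /= !big_ord_recl /=.
rewrite !subn0 modnn expr0 !mul1r mulr1 addrA; congr (_ + _).
  by rewrite [in RHS]mulrA hb ?ltnSn // u1 exprS; ring.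
apply: eq_bigr => -[i hi] _; rewrite /bump /= add1n !subSS modn_small; last by lia.
rewrite (subSn (ltnW hi)) [in RHS]mulrA [in RHS]mulrA hb ?u1; last by lia.
by ring.
Qed.

Lemma linrecSS a0 a1 c1 c2 k :
  linrec a0 a1 c1 c2 k.+2 =
    (c1 * linrec a0 a1 c1 c2 k.+1 + c2 * linrec a0 a1 c1 c2 k)%N.
Proof. by []. Qed.

Lemma natr_linrecSS (R : pzSemiRingType) a0 a1 c1 c2 k :
  (linrec a0 a1 c1 c2 k.+2)%:R =
    c1%:R * (linrec a0 a1 c1 c2 k.+1)%:R + c2%:R * (linrec a0 a1 c1 c2 k)%:R :> R.
Proof. by rewrite linrecSS natrD !natrM. Qed.

Lemma linrec_homo a0 a1 c1 c2 : (0 < c1)%N ->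
  {homo (fun k => linrec a0 a1 c1 c2 k.+1) : i j / (i <= j)%N}.
Proof.
move=> c1_gt0; apply: (homo_leq leqnn leq_trans) => k.
rewrite linrecSS; nia.
Qed.

Section LucasSequence.
Variables (c1 c2 : nat) (m : nat).
Hypotheses (c1_gt0 : (0 < c1)%N) (c2_gt0 : (0 < c2)%N).
Let U k : rat := (linrec 0 1 c1 c2 k)%:R.

Lemma det_circ_linrec01 :
  \det (gcirc m.+2 1 (fun k => U k.+1)) =
    (1 - U m.+3) ^+ m.+1 + c2%:R ^+ m.+1 * U m.+2 ^+ m *
      \sum_(1 <= i < m.+2) U i * ((1 - U m.+3) / (c2%:R * U m.+2)) ^+ i.-1.
Proof.
have U_rec k : U k.+2 = c1%:R * U k.+1 + c2%:R * U k by exact: natr_linrecSS.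
have [U0 U1] : U 0 = 0 /\ U 1 = 1 by [].
have Um_gt0 : (0 < linrec 0 1 c1 c2 m.+2)%N.
  exact: (linrec_homo 0 1 c2 c1_gt0 (leq0n m.+1)).
rewrite (det_circ_shift (s:=c2%:R) (w:=c2%:R * U m.+2) (b:=U) U_rec) //.
- by rewrite [c2%:R ^+ _]exprS exprMn !mulrA.
- by rewrite U0 subr0.
- by rewrite mulf_neq0 // pnatr_eq0 -lt0n.
- by move=> i _; rewrite (U_rec i) (U_rec 0%N) U0 U1; ring.
Qed.
End LucasSequence.

Lemma det_circ_Luc m : let L k : rat := (Luc k)%:R in
  \det (gcirc m.+2 1 (fun k => L k.+1)) =
    (1 - L m.+3) ^+ m.+1 + (L m.+2 - 2) ^+ m *
      \sum_(1 <= i < m.+2) (L i.+2 - 3 * L i.+1) * ((1 - L m.+3) / (L m.+2 - 2)) ^+ i.-1.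
Proof.
move=> L; have L_rec k : L k.+2 = 1%:R * L k.+1 + 1%:R * L k.
  exact: natr_linrecSS.
have Lm_ge3 : (3 <= Luc m.+2)%N.
  exact: (linrec_homo (c1:=1) 2 1 1 isT (ltn0Sn m)).
pose b i := L i.+2 - 3 * L i.+1.
rewrite (det_circ_shift (s:=1) (w:=L m.+2 - 2) (b:=b) L_rec).
- by rewrite mul1r.
- by [].
- by rewrite mul1r.
- by rewrite subr_eq0 eqr_nat; move: Lm_ge3; lia.
- by move=> i _; rewrite mul1r.
Qed.

Theorem mainTheorem4 (n g : nat) (hn : (2 <= n)%N) (hg : coprime n g) :
  [/\
   \det (gcirc n g (fun k => (Fib k.+1)%:R : rat)) =
     \det (Qg rat n g) *
     ((1 - (Fib n.+1)%:R) ^+ n.-1 +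
      (Fib n)%:R ^+ (n - 2) *
        \sum_(1 <= i < n) (Fib i)%:R * ((1 - (Fib n.+1)%:R) / (Fib n)%:R) ^+ i.-1),
   \det (gcirc n g (fun k => (Luc k.+1)%:R : rat)) =
     \det (Qg rat n g) *
     ((1 - (Luc n.+1)%:R) ^+ n.-1 +
      ((Luc n)%:R - 2) ^+ (n - 2) *
        \sum_(1 <= i < n) ((Luc i.+2)%:R - 3 * (Luc i.+1)%:R) *
          ((1 - (Luc n.+1)%:R) / ((Luc n)%:R - 2)) ^+ i.-1),
   \det (gcirc n g (fun k => (Pell k.+1)%:R : rat)) =
     \det (Qg rat n g) *
     ((1 - (Pell n.+1)%:R) ^+ n.-1 +
      (Pell n)%:R ^+ (n - 2) *
        \sum_(1 <= i < n) (Pell i)%:R * ((1 - (Pell n.+1)%:R) / (Pell n)%:R) ^+ i.-1)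
   &
   \det (gcirc n g (fun k => (Jac k.+1)%:R : rat)) =
     \det (Qg rat n g) *
     ((1 - (Jac n.+1)%:R) ^+ n.-1 +
      2 ^+ n.-1 * (Jac n)%:R ^+ (n - 2) *
        \sum_(1 <= i < n) (Jac i)%:R * ((1 - (Jac n.+1)%:R) / (2 * (Jac n)%:R)) ^+ i.-1)].
Proof.
case: n hn {hg} => [|[|m]] // _; rewrite !subSS subn0.
split; rewrite [in LHS]gcirc_Qg_mul det_mulmx; congr (_ * _).
- by rewrite (det_circ_linrec01 (c1:=1) (c2:=1) m isT isT) expr1n !mul1r.
- exact: det_circ_Luc.
- by rewrite (det_circ_linrec01 (c1:=2) (c2:=1) m isT isT) expr1n !mul1r.
- exact: (det_circ_linrec01 (c1:=1) (c2:=2) m isT isT).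
Qed.
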